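(* Let $x\in V(D^+)\setminus\{s\}$ and $y\in C(x)$. Then there are two internally disjoint directed paths in $D^+$, one from $I_s(x)$ to $x$ and one from $y$ to $x$.
   Context: $G=(V,E,w)$ is a simple, connected, undirected graph with positive edge lengths, $s,t\in V$. $D$ is the union of all shortest $st$-paths of $G$, and $D^+$ is the directed acyclic graph obtained from $D$ by orienting every edge toward $t$. $x\prec y$ means $x$ is an ancestor of $y$ in $D^+$ (a directed path of positive length from $x$ to $y$ exists). For $x\neq s$, $v\neq x$ is an $s$-dominator of $x$ if every directed path from $s$ to $x$ in $D^+$ contains $v$, and $I_s(x)$ is the $s$-dominator of $x$ closest to $x$ (every other $s$-dominator of $x$ is an $s$-dominator of $I_s(x)$). For $x\neq s$, $C(x)=\{v\in V(D^+): I_s(x)\prec v\prec x\}$. Two paths are internally disjoint if they share no vertex other than their endpoints. *)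

From HB Require Import structures.
From mathcomp Require Import all_boot all_order all_algebra.
Set Implicit Arguments. Unset Strict Implicit. Unset Printing Implicit Defensive.
Import Order.TTheory GRing.Theory Num.Theory.
Local Open Scope ring_scope.

(* G = (T, e, w): simple undirected graph on a finite vertex type T with
   adjacency relation e and edge lengths w (symmetric, positive on edges). *)
Definition simple_graph (T : finType) (e : rel T) : Prop :=
  symmetric e /\ irreflexive e.

Definition connected_graph (T : finType) (e : rel T) : Prop :=
  forall x y : T, connect e x y.

Definition pos_lengths (T : finType) (R : realFieldType) (e : rel T)
  (w : T -> T -> R) : Prop :=
  (forall x y, w x y = w y x) /\ (forall x y, e x y -> 0 < w x y).

Fixpoint sp_wlen (T : finType) (R : realFieldType) (w : T -> T -> R)
  (x : T) (q : seq T) : R :=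
  match q with
  | [::] => 0
  | y :: q' => w x y + sp_wlen w y q'
  end.

Definition sp_gpath (T : finType) (e : rel T) (x b : T) (q : seq T) : Prop :=
  path e x q /\ last x q = b /\ uniq (x :: q).

Definition sp_shortest (T : finType) (R : realFieldType) (e : rel T)
  (w : T -> T -> R) (s t : T) (q : seq T) : Prop :=
  sp_gpath e s t q /\ forall q', sp_gpath e s t q' -> sp_wlen w s q <= sp_wlen w s q'.

Definition sp_inD (T : finType) (R : realFieldType) (e : rel T)
  (w : T -> T -> R) (s t : T) (v : T) : Prop :=
  exists q, sp_shortest e w s t q /\ v \in s :: q.

(* arcs of D^+: edges of sp_shortest s-t paths, oriented toward t *)
Definition sp_arc (T : finType) (R : realFieldType) (e : rel T)
  (w : T -> T -> R) (s t : T) (u v : T) : Prop :=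
  exists q, sp_shortest e w s t q /\
    exists p1 p2, s :: q = p1 ++ u :: v :: p2.

Fixpoint sp_dwalk (T : Type) (a : T -> T -> Prop) (x : T) (q : seq T) : Prop :=
  match q with
  | [::] => True
  | y :: q' => a x y /\ sp_dwalk a y q'
  end.

Definition sp_dpath (T : finType) (a : T -> T -> Prop) (x y : T) (p : seq T)
  : Prop :=
  exists q, p = x :: q /\ sp_dwalk a x q /\ last x q = y.

Definition sp_anc (T : finType) (a : T -> T -> Prop) (x y : T) : Prop :=
  exists q, q <> [::] /\ sp_dwalk a x q /\ last x q = y.

Definition sp_sdom (T : finType) (a : T -> T -> Prop) (s x v : T) : Prop :=
  v <> x /\ forall p, sp_dpath a s x p -> v \in p.

(* i = I_s(x): the s-dominator of x closest to x, i.e. every other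
   s-dominator of x is an s-dominator of i *)
Definition sp_idom (T : finType) (a : T -> T -> Prop) (s x i : T) : Prop :=
  sp_sdom a s x i /\ forall v, sp_sdom a s x v -> v <> i -> sp_sdom a s i v.

Definition sp_inC (T : finType) (a : T -> T -> Prop) (inV : T -> Prop)
  (s x i v : T) : Prop :=
  sp_idom a s x i /\ inV v /\ sp_anc a i v /\ sp_anc a v x.

(* Every arc of D^+ strictly increases the distance from s, so D^+ is acyclic.
   In an acyclic digraph, two vertices u and b that reach x are joined to x by
   paths meeting only at x unless some vertex v <> x lies on every u-x path and
   on every b-x path (the two-path case of Menger's theorem).  For u = I_s(x)
   and y in C(x) such a v cannot exist: v = I_s(x) would give a path from y
   back to I_s(x); otherwise v is an s-dominator of x, hence of I_s(x), and
   lies both before and after I_s(x), again closing a cycle. *)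

From mathcomp Require Import all_boot all_order all_algebra.
From mathcomp Require Import zify.
From Stdlib Require Import Classical ClassicalEpsilon.
Set Implicit Arguments. Unset Strict Implicit. Unset Printing Implicit Defensive.
Import Order.TTheory GRing.Theory Num.Theory.

Definition asbool (P : Prop) : bool :=
  if excluded_middle_informative P then true else false.

Lemma asboolP (P : Prop) : reflect P (asbool P).
Proof. by rewrite /asbool; case: excluded_middle_informative => h; constructor. Qed.

Section ShortestPaths.
Local Open Scope ring_scope.
Variables (T : finType) (R : realFieldType) (e : rel T) (w : T -> T -> R).
Hypothesis w_gt0 : forall x y, e x y -> 0 < w x y.

Lemma sp_wlen_cat x q1 q2 :
  sp_wlen w x (q1 ++ q2) = sp_wlen w x q1 + sp_wlen w (last x q1) q2.
Proof. by elim: q1 x => [|y q1 IH] x /=; rewrite ?add0r // IH addrA. Qed.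

Lemma sp_wlen_ge0 x q : path e x q -> 0 <= sp_wlen w x q.
Proof.
elim: q x => [|y q IH] x //= /andP[exy pq].
by rewrite addr_ge0 ?(ltW (w_gt0 exy)) ?IH.
Qed.

Lemma sp_wlen_shorten x q : path e x q -> exists q',
  [/\ sp_gpath e x (last x q) q', {subset q' <= q}
    & sp_wlen w x q' <= sp_wlen w x q].
Proof.
elim: q x => [|y q IH] x /=; first by exists [::].
case/andP=> exy /IH[q' [[pq' [lq' uq']] sq' wq']].
have [p [pp up lp sp wp]] : exists p, [/\ path e x p, uniq p,
    last x p = last y q, {subset p <= y :: q} & sp_wlen w x p <= w x y + sp_wlen w y q].
  exists (y :: q'); split => //=; first by rewrite exy.
  - by move=> z; rewrite !inE => /orP[->|/sq' ->]; rewrite ?orbT.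
  - by rewrite lerD2l.
have [xp | xNp] := boolP (x \in p); last by exists p; split => //; split; rewrite //= xNp.
case/splitPr: xp pp up lp sp wp => p1 p2.
rewrite cat_path cat_uniq last_cat /= => /and3P[pp1 ex1 pp2] /and3P[_ _ /andP[xNp2 up2]].
move=> lp sp wp; exists p2; split; first by split => //; split; rewrite //= xNp2.
- by move=> z z2; apply: sp; rewrite mem_cat inE z2 !orbT.
- apply: le_trans wp; rewrite sp_wlen_cat /= addrA lerDr.
  by rewrite addr_ge0 ?sp_wlen_ge0 ?(ltW (w_gt0 ex1)).
Qed.

Variables s t : T.

Definition sp_dist (v : T) (r : R) : Prop :=
  (exists2 p, sp_gpath e s v p & sp_wlen w s p = r) /\
  (forall p, sp_gpath e s v p -> r <= sp_wlen w s p).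

Lemma sp_dist_uniq v r1 r2 : sp_dist v r1 -> sp_dist v r2 -> r1 = r2.
Proof. by move=> [[p1 g1 <-] m1] [[p2 g2 <-] m2]; apply/le_anti; rewrite m1 // m2. Qed.

Lemma sp_dist_prefix q q1 q2 : sp_shortest e w s t q -> q = q1 ++ q2 ->
  sp_dist (last s q1) (sp_wlen w s q1).
Proof.
move=> [[pq [lq uq]] minq] Eq; subst q.
move: pq uq; rewrite cat_path -cat_cons cat_uniq => /andP[pq1 pq2] /andP[uq1 _].
split; first by exists q1.
move=> r [pr [lr _]].
have /sp_wlen_shorten[r' [[pr' [lr' ur']] _ wr']] : path e s (r ++ q2).
  by rewrite cat_path pr lr.
have gr' : sp_gpath e s t r' by split=> //; split=> //; rewrite lr' last_cat lr -last_cat.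
by move: (le_trans (minq r' gr') wr'); rewrite !sp_wlen_cat lr lerD2r.
Qed.

Lemma sp_arc_dist u v : sp_arc e w s t u v ->
  exists r1 r2, [/\ sp_dist u r1, sp_dist v r2 & r1 < r2].
Proof.
move=> [q [shq [p1 [p2 Eq]]]].
have [qu Equ] : exists qu, rcons p1 u = s :: qu.
  by case: p1 Eq => [|z p1] /= [-> _]; [exists [::] | exists (rcons p1 u)].
have Eq' : q = qu ++ v :: p2 by move: Eq; rewrite -cat_rcons Equ => -[].
have Lu : last s qu = u by rewrite -[last s qu]/(last s (s :: qu)) -Equ last_rcons.
have euv : e u v.
  by case: shq => [[+ _] _]; rewrite Eq' cat_path Lu /= => /and3P[_ euv _].
exists (sp_wlen w s qu), (sp_wlen w s (rcons qu v)); split.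
- by have := sp_dist_prefix shq Eq'; rewrite Lu.
- by have := @sp_dist_prefix q (rcons qu v) p2 shq; rewrite last_rcons cat_rcons; apply.
- by rewrite -cats1 sp_wlen_cat Lu /= addr0 ltrDl w_gt0.
Qed.

Lemma sp_dwalk_dist u q : sp_dwalk (sp_arc e w s t) u q -> q != [::] ->
  exists r1 r2, [/\ sp_dist u r1, sp_dist (last u q) r2 & r1 < r2].
Proof.
elim: q u => [|v q IH] u //= [/sp_arc_dist[r1 [r2 [d1 d2 lt12]]] W] _.
case: q IH W => [|z q] IH W; first by exists r1, r2.
have [r2' [r3 [d2' d3 lt23]]] := IH v W isT.
by exists r1, r3; rewrite (sp_dist_uniq d2 d2') in lt12; split => //; apply: lt_trans lt23.
Qed.

Lemma sp_arc_acyclic u q :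
  sp_dwalk (sp_arc e w s t) u q -> last u q = u -> q = [::].
Proof.
case: q => [//|v q] W L.
have [r1 [r2 [d1 d2 lt12]]] := sp_dwalk_dist W isT.
by rewrite L in d2; rewrite (sp_dist_uniq d2 d1) ltxx in lt12.
Qed.

End ShortestPaths.

Lemma sp_dwalk_consecutive (X : Type) (B : X -> X -> Prop) pre x r :
  (forall p1 p2 u v, pre ++ x :: r = p1 ++ u :: v :: p2 -> B u v) ->
  sp_dwalk B x r.
Proof.
elim: r pre x => [|y r IH] pre x B_infix //=; split; first exact: (B_infix pre r).
by apply: (IH (rcons pre x)) => p1 p2 u v E; apply: (B_infix p1 p2); rewrite -E cat_rcons.
Qed.

Lemma sp_shortest_dpath (T : finType) (R : realFieldType) (e : rel T)
  (w : T -> T -> R) s t q :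
  sp_shortest e w s t q -> sp_dpath (sp_arc e w s t) s t (s :: q).
Proof.
move=> shq; exists q; split => //; split; last by case: shq => [[_ []]].
apply: (@sp_dwalk_consecutive _ _ [::]) => p1 p2 u v E.
by exists q; split => //; exists p1, p2.
Qed.

Section AcyclicDigraph.
Variables (T : finType) (A : T -> T -> Prop).
Hypothesis A_acyclic : forall u q, sp_dwalk A u q -> last u q = u -> q = [::].

Lemma sp_dwalk_cat x q1 q2 :
  sp_dwalk A x (q1 ++ q2) <-> sp_dwalk A x q1 /\ sp_dwalk A (last x q1) q2.
Proof. by elim: q1 x => [|y q1 IH] x /=; [tauto | rewrite IH; tauto]. Qed.

Lemma sp_dpath_cat u v z p1 p2 : sp_dpath A u v p1 -> sp_dpath A v z p2 ->
  sp_dpath A u z (p1 ++ behead p2).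
Proof.
move=> [q1 [-> [W1 L1]]] [q2 [-> [W2 L2]]].
by exists (q1 ++ q2); rewrite last_cat L1 sp_dwalk_cat L1.
Qed.

(* Splitting at the first occurrence of v matters: directed paths may repeat vertices. *)
Lemma sp_dpath_split u z p v : sp_dpath A u z p -> v \in p ->
  exists q1 q2, [/\ p = u :: q1 ++ q2, last u q1 = v, v \notin belast u q1,
    sp_dpath A u v (u :: q1) & sp_dpath A v z (v :: q2)].
Proof.
move=> [q [-> [W L]]]; elim: q u W L => [|y q IH] u W L.
  by rewrite inE => /eqP->; exists [::], [::]; split => //; exists [::].
have [->|vu] := eqVneq v u.
  by exists [::], (y :: q); split => //; [exists [::] | exists (y :: q)].
rewrite inE (negbTE vu) /= => vq; case: W => Auy W.
have [q1 [q2 [-> L1 B1 P1 P2]]] := IH y W L vq.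
exists (y :: q1), q2; split => //=; first by rewrite inE negb_or vu.
by case: P1 => q1' [[<-] [W1 _]]; exists (y :: q1).
Qed.

Definition dreach u v := exists p, sp_dpath A u v p.

Lemma dreach_refl u : dreach u u.
Proof. by exists [:: u], [::]. Qed.

Lemma sp_dpath_mem u z p v : sp_dpath A u z p -> v \in p -> dreach u v /\ dreach v z.
Proof.
move=> P /(sp_dpath_split P)[q1 [q2 [_ _ _ P1 P2]]].
by split; [exists (u :: q1) | exists (v :: q2)].
Qed.

Lemma sp_anc_dreach u v : sp_anc A u v -> dreach u v.
Proof. by move=> [q [_ [W L]]]; exists (u :: q), q. Qed.

Lemma dreach_antisym u v : dreach u v -> dreach v u -> u = v.
Proof.
move=> [_ [q1 [_ [W1 L1]]]] [_ [q2 [_ [W2 L2]]]].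
have : q1 ++ q2 = [::].
  by apply: (A_acyclic (u := u)); [apply/sp_dwalk_cat; rewrite L1 | rewrite last_cat L1 L2].
by case: q1 L1 {W1}.
Qed.

Lemma sp_anc_neq u v : sp_anc A u v -> u <> v.
Proof. by move=> [q [qn [W L]]] uv; apply: qn; apply: A_acyclic W _; rewrite L uv. Qed.

Definition reach_set u := [set v | asbool (dreach u v)].

Lemma reach_set_arc_lt u c : A u c -> #|reach_set c| < #|reach_set u|.
Proof.
move=> Auc; have Puc : sp_dpath A u c [:: u; c] by exists [:: c].
apply/proper_card/properP; split.
  apply/subsetP => v; rewrite !inE => /asboolP[p P]; apply/asboolP.
  by exists ([:: u; c] ++ behead p); apply: sp_dpath_cat Puc P.
exists u; rewrite inE; first exact/asboolP/dreach_refl.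
apply/asboolP => /(dreach_antisym (ex_intro _ _ Puc)) uc; subst c.
by have := @A_acyclic u [:: u] (conj Auc I) erefl.
Qed.

Variable x : T.

Definition separates v u := forall p, sp_dpath A u x p -> v \in p.

Definition common_separator u b :=
  exists v, [/\ v <> x, separates v u & separates v b].

Definition disjoint_paths u b := exists p1 p2,
  [/\ sp_dpath A u x p1, sp_dpath A b x p2 & forall v, v \in p1 -> v \in p2 -> v = x].

Lemma separates_refl u : separates u u.
Proof. by move=> p [q [-> _]]; rewrite mem_head. Qed.

Lemma separates_trans c v1 v2 : separates v1 c -> separates v2 v1 -> separates v2 c.
Proof.
move=> s1 s2 p P; have [q1 [q2 [-> L _ _ P2]]] := sp_dpath_split P (s1 _ P).
move: (s2 _ P2); rewrite -cat_cons mem_cat inE => /orP[/eqP->|->]; last by rewrite orbT.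
by rewrite -L mem_last.
Qed.

Lemma separates_on_path b P v1 v2 : separates v2 b -> sp_dpath A b x P ->
  v1 \in P -> v1 <> v2 -> (index v1 P <= index v2 P)%N -> separates v2 v1.
Proof.
move=> s2 HP v1P v12 le12 p Hp; apply: contraT => v2Np.
have [q1 [q2 [E0 L1 B1 Hpre _]]] := sp_dpath_split HP v1P.
move: (s2 _ (sp_dpath_cat Hpre Hp)); case: Hp v2Np => q [-> _] /=.
rewrite inE negb_or => /andP[_ v2Nq]; rewrite -cat_cons mem_cat (negbTE v2Nq) orbF.
rewrite lastI L1 mem_rcons inE => /orP[/eqP v21|v2B]; first by case: v12.
have EP : P = belast b q1 ++ v1 :: q2 by rewrite E0 -cat_cons lastI L1 cat_rcons.
move: le12; rewrite EP !index_cat (negbTE B1) v2B /= eqxx addn0.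
by rewrite leqNgt index_mem v2B.
Qed.

Lemma disjoint_paths_sym u b : disjoint_paths u b -> disjoint_paths b u.
Proof. by move=> [p1 [p2 [P1 P2 H]]]; exists p2, p1; split => // v v2 v1; apply: H. Qed.

Lemma disjoint_paths_target b : dreach b x -> disjoint_paths x b.
Proof.
move=> [p P]; exists [:: x], p; split => //; first by exists [::].
by move=> v; rewrite inE => /eqP.
Qed.

(* A common separator of u and b exists as soon as each successor of u
   reaching x has one with b: the separator on a fixed b-x path P0 with the
   largest index separates every successor, hence u. *)
Lemma common_separator_succ u b : u <> x -> dreach u x -> dreach b x ->
  (forall c, A u c -> dreach c x -> common_separator c b) -> common_separator u b.
Proof.
move=> ux [_ [qu [_ [Wu Lu]]]] [P0 HP0] sep_succ.
pose S v := asbool (exists c, [/\ A u c, dreach c x, v <> x, separates v c & separates v b]).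
have [c0 Auc0 rc0] : exists2 c0, A u c0 & dreach c0 x.
  case: qu Wu Lu => [|c q] /= Wu Lu; first by case: ux.
  by case: Wu => Auc W; exists c => //; exists (c :: q), q.
have [v0 [v0x sv0c0 sv0b]] := sep_succ c0 Auc0 rc0.
have Sv0 : S v0 by apply/asboolP; exists c0.
case: (arg_maxnP (fun v => index v P0) Sv0) => vs.
move=> /asboolP[_ [_ _ vsx _ svsb]] vs_max; exists vs; split => //.
move=> p [[|c q] [-> [W L]]] /=; first by case: ux.
case: W => Auc W; rewrite inE; apply/orP; right.
have rc : dreach c x by exists (c :: q), q.
have [vc [vcx svcc svcb]] := sep_succ c Auc rc.
have le : (index vc P0 <= index vs P0)%N by apply/vs_max/asboolP; exists c.
suff svsc : separates vs c by apply: svsc; exists q.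
have [<-//|vcs] := eqVneq vc vs.
apply: separates_trans svcc (separates_on_path svsb HP0 (svcb _ HP0) _ le).
by move/eqP: vcs.
Qed.

Lemma disjoint_paths_step u b :
  (forall c, A u c -> dreach c x -> ~ common_separator c b -> disjoint_paths c b) ->
  u <> x -> dreach u x -> dreach b x -> ~ dreach b u -> ~ common_separator u b ->
  disjoint_paths u b.
Proof.
move=> IH ux ru rb bNu ncs.
have [[c [Auc rc ncb]]|noc] :=
  classic (exists c, [/\ A u c, dreach c x & ~ common_separator c b]).
  have [p1 [p2 [[q [-> [W L]]] P2 disj]]] := IH c Auc rc ncb.
  exists (u :: c :: q), p2; split => //; first by exists (c :: q).
  move=> v; rewrite inE => /orP[/eqP-> u2|]; last exact: disj.
  by case: bNu; case: (sp_dpath_mem P2 u2).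
case: ncs; apply: common_separator_succ => // c Auc rc.
by apply: NNPP => ncb; apply: noc; exists c.
Qed.

Lemma two_disjoint_paths u b : dreach u x -> dreach b x ->
  ~ common_separator u b -> disjoint_paths u b.
Proof.
have [n] : exists n, (#|reach_set u| + #|reach_set b| < n)%N by eexists; apply: ltnSn.
elim: n u b => [//|n IH] u b Hn ru rb ncs.
have [->|ux] := eqVneq u x; first exact: disjoint_paths_target.
have [->|bx] := eqVneq b x; first exact/disjoint_paths_sym/disjoint_paths_target.
have ub : u <> b.
  by move=> ub; subst b; apply: ncs; exists u; split; [apply/eqP | exact: separates_refl..].
wlog bNu : u b Hn ru rb ncs ux bx ub / ~ dreach b u.
  move=> hwlog; have [rbu|] := classic (dreach b u); last exact: hwlog.
  apply/disjoint_paths_sym/hwlog; rewrite 1?addnC //.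
  - by move=> [v [vx svb svu]]; apply: ncs; exists v.
  - by move=> bu; subst b.
  - by move/dreach_antisym/(_ rbu).
apply: disjoint_paths_step => //; last exact/eqP.
move=> c Auc rc ncb; apply: IH => //.
by have := reach_set_arc_lt Auc; lia.
Qed.

Lemma no_common_separator_idom s i y : sp_idom A s x i -> dreach s x ->
  sp_anc A i y -> dreach y x -> ~ common_separator i y.
Proof.
move=> [[_ i_sep_s] i_idom] [Psx HPsx] iy [Pyx HPyx] [v [vx v_sep_i v_sep_y]].
have [rsi [Pix HPix]] := sp_dpath_mem HPsx (i_sep_s _ HPsx).
have [vi|vi] := eqVneq v i.
  subst v; have [ryi _] := sp_dpath_mem HPyx (v_sep_y _ HPyx).
  exact: sp_anc_neq iy (dreach_antisym (sp_anc_dreach iy) ryi).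
have [_ v_dom_i] := i_idom v (conj vx (separates_trans i_sep_s v_sep_i)) (elimN eqP vi).
case: rsi => Psi HPsi; have [_ rvi] := sp_dpath_mem HPsi (v_dom_i _ HPsi).
have [riv _] := sp_dpath_mem HPix (v_sep_i _ HPix).
by move/eqP: vi; apply; apply: dreach_antisym rvi riv.
Qed.

End AcyclicDigraph.

Theorem lemma4 (T : finType) (R : realFieldType) (e : rel T)
  (w : T -> T -> R) (s t : T) :
  simple_graph e -> connected_graph e -> pos_lengths e w ->
  forall x : T, sp_inD e w s t x -> x <> s ->
  forall i : T, sp_idom (sp_arc e w s t) s x i ->
  forall y : T, sp_inC (sp_arc e w s t) (sp_inD e w s t) s x i y ->
  exists p1 p2 : seq T,
    sp_dpath (sp_arc e w s t) i x p1 /\ sp_dpath (sp_arc e w s t) y x p2 /\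
    (forall v, v \in p1 -> v \in p2 ->
       (v \in [:: i; x]) && (v \in [:: y; x])).
Proof.
move=> _ _ [_ w_gt0] x [q [shq xq]] _ i idom_i y [_ [_ [iy yx]]].
have acyclic := sp_arc_acyclic w_gt0 (s := s) (t := t).
have [rsx _] := sp_dpath_mem (sp_shortest_dpath shq) xq.
have ryx := sp_anc_dreach yx.
have [_ rix] : dreach (sp_arc e w s t) s i /\ dreach (sp_arc e w s t) i x.
  by case: rsx => p P; apply: sp_dpath_mem P (idom_i.1.2 _ P).
have [p1 [p2 [P1 P2 disj]]] :=
  two_disjoint_paths acyclic rix ryx (no_common_separator_idom acyclic idom_i rsx iy ryx).
exists p1, p2; split => //; split => // v v1 v2.
by rewrite (disj v v1 v2) !inE eqxx !orbT.
Qed.
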